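(* In the Rustichini setting there exists a game-dependent constant $\operatorname{Lip}_\Delta<\infty$ such that for every nonempty $F\in\mathcal F$ and every $x\in\mathcal K$, $$\max_{\pi\in\mathcal N(F)}\Delta(\pi,x)\le\operatorname{Lip}_\Delta\operatorname{dist}_1(x,F).$$
   Context: Rustichini setting: a $k$-action partial monitoring game with finite latent space $\mathcal Z$, loss $\mathcal L:[k]\times\mathcal Z\to[0,1]$, signal $\mathcal S:[k]\times\mathcal Z\to\Sigma$; $\mathcal K$ = probability simplex on $\mathcal Z$ (a subset of $\mathbb R^{\mathcal Z}$); $\Delta_k$ = probability simplex on $[k]$; $\mathcal L(\pi,x)=\sum_{a,z}\pi(a)x(z)\mathcal L(a,z)$; $\mathcal S(a,x)$ = law of $\mathcal S(a,z)$, $z\sim x$; $x\,\mathrm R\,y$ iff $\mathcal S(a,x)=\mathcal S(a,y)$ for all $a$; $\mathcal V(\pi,x)=\sup_{y\,\mathrm R\,x}\mathcal L(\pi,y)$; $\mathcal V_\star(x)=\min_{\pi\in\Delta_k}\mathcal V(\pi,x)$; $\Delta(\pi,x)=\mathcal V(\pi,x)-\mathcal V_\star(x)$. $m$ is the smallest integer with $\mathcal V_\star(x)=\min_{\alpha\in[m]}\mathcal V^m(x)_\alpha$ for some linear $\mathcal V^m:\mathcal K\to\mathbb R^m$; cells $P_\alpha=\{x\in\mathcal K:\mathcal V_\star(x)=\mathcal V^m(x)_\alpha\}$; $\mathcal F=\bigcup_{\alpha\in[m]}\operatorname{faces}(P_\alpha)$. $\mathcal N(x)=\{\pi\in\Delta_k:\Delta(\pi,x)=0\}$;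 for nonempty $F\in\mathcal F$, $\mathcal N(F)=\mathcal N(x)$ for any $x$ in the relative interior of $F$ (this does not depend on the choice of $x$). $\operatorname{dist}_1(x,F)=\min_{y\in F}\|x-y\|_1$. *)

From HB Require Import structures.
From mathcomp Require Import all_boot all_order all_algebra.
From mathcomp Require Import boolp classical_sets reals.
Set Implicit Arguments. Unset Strict Implicit. Unset Printing Implicit Defensive.
Import Order.TTheory GRing.Theory Num.Theory.
Local Open Scope ring_scope.
Local Open Scope classical_set_scope.

Section Rustichini.
Variables (R : realType) (k : nat) (Z : finType) (Sigma : eqType).
Variables (L : 'I_k -> Z -> R) (S : 'I_k -> Z -> Sigma).

Definition simplex (T : finType) : set (T -> R) :=
  [set x | (forall t, 0 <= x t) /\ \sum_(t : T) x t = 1].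

(* K = simplex Z ; Delta_k = simplex 'I_k *)

Definition lossE (pi : 'I_k -> R) (x : Z -> R) : R :=
  \sum_(a : 'I_k) \sum_(z : Z) pi a * x z * L a z.

(* x R y : the laws of S(a,z), z ~ x and z ~ y, coincide for every action a *)
Definition sig_rel (x y : Z -> R) : Prop :=
  forall (a : 'I_k) (s : Sigma),
    \sum_(z : Z | S a z == s) x z = \sum_(z : Z | S a z == s) y z.

Definition Vfun (pi : 'I_k -> R) (x : Z -> R) : R :=
  sup [set lossE pi y | y in [set y | simplex y /\ sig_rel y x]].

(* V_*(x) = min_{pi in Delta_k} V(pi, x) (the min is attained, so inf = min) *)
Definition Vstar (x : Z -> R) : R :=
  inf [set Vfun pi x | pi in @simplex 'I_k].

Definition Delta (pi : 'I_k -> R) (x : Z -> R) : R := Vfun pi x - Vstar x.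

Definition Nset (x : Z -> R) : set ('I_k -> R) :=
  [set pi | simplex pi /\ Delta pi x = 0].

(* linear maps K -> R^m, given by coefficient vectors c alpha : R^Z *)
Definition linv (m : nat) (c : 'I_m -> Z -> R) (alpha : 'I_m) (x : Z -> R) : R :=
  \sum_(z : Z) c alpha z * x z.

Definition min_repr (m : nat) (c : 'I_m -> Z -> R) : Prop :=
  forall x, simplex x ->
    (exists alpha, Vstar x = linv c alpha x) /\
    (forall beta, Vstar x <= linv c beta x).

Definition minimal_repr (m : nat) (c : 'I_m -> Z -> R) : Prop :=
  min_repr c /\ forall (m' : nat) (c' : 'I_m' -> Z -> R), min_repr c' -> (m <= m')%N.

Definition cell (m : nat) (c : 'I_m -> Z -> R) (alpha : 'I_m) : set (Z -> R) :=
  [set x | simplex x /\ Vstar x = linv c alpha x].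

End Rustichini.

Section Geometry.
Variables (R : realType) (Z : finType).

Definition dotp (a x : Z -> R) : R := \sum_(z : Z) a z * x z.

(* faces of a polytope P: intersections of P with the boundary hyperplane of a
   valid linear inequality (includes the empty face and P itself) *)
Definition face (P F : set (Z -> R)) : Prop :=
  exists (a : Z -> R) (b : R),
    (forall x, P x -> dotp a x <= b) /\ F = [set x | P x /\ dotp a x = b].

Definition aff_hull (F : set (Z -> R)) : set (Z -> R) :=
  [set y | exists (n : nat) (p : 'I_n -> Z -> R) (w : 'I_n -> R),
     (forall i, F (p i)) /\ \sum_(i < n) w i = 1 /\
     forall z, y z = \sum_(i < n) w i * p i z].

Definition norm1 (x : Z -> R) : R := \sum_(z : Z) `|x z|.

Definition relint (F : set (Z -> R)) : set (Z -> R) :=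
  [set x | F x /\ exists eps : R, 0 < eps /\
     forall y, aff_hull F y -> norm1 (fun z => y z - x z) < eps -> F y].

Definition dist1 (x : Z -> R) (F : set (Z -> R)) : R :=
  inf [set norm1 (fun z => x z - y z) | y in F].

End Geometry.

Definition NF (R : realType) (k : nat) (Z : finType) (Sigma : eqType)
  (L : 'I_k -> Z -> R) (S : 'I_k -> Z -> Sigma) (F : set (Z -> R)) : set ('I_k -> R) :=
  [set pi | exists x0, relint F x0 /\ Nset L S x0 pi].

From HB Require Import structures.
From mathcomp Require Import all_boot all_order all_algebra.
From mathcomp Require Import boolp classical_sets reals.
From mathcomp Require Import ring lra.
Import Order.TTheory GRing.Theory Num.Theory.
Set Implicit Arguments. Unset Strict Implicit. Unset Printing Implicit Defensive.
Local Open Scope ring_scope.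
Local Open Scope classical_set_scope.

(* Both terms of [Delta pi x = V(pi, x) - V_*(x)] are Lipschitz on the simplex:
   [V_*] as a minimum of finitely many linear maps, and [V(pi, .)] because the
   fibers of the signal map move in a Lipschitz way.  The latter is a
   Hoffman-type bound for the linear map listing the total mass and the masses
   of all signal classes, obtained by a conformal decomposition into elementary
   vectors.  On a cell [V_*] is linear and [V(pi, .)] concave, so [Delta pi] is
   a nonnegative concave function on every face [F]; vanishing at a relative
   interior point of [F], it vanishes on all of [F].  Hence for [y] in [F],
   [Delta pi x <= Delta pi y + Lip * |x - y|_1 = Lip * |x - y|_1]. *)

Section Signs.
Variable R : realFieldType.

Definition conforms (a b : R) : Prop := 0 <= a * b /\ (b = 0 -> a = 0).

Definition between0 (a b : R) : Prop := (0 <= a <= b) \/ (b <= a <= 0).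

Lemma ratio_gt0 (a b : R) : 0 < a * b -> 0 < b / a.
Proof.
move=> ab; have a0 : a != 0 by apply: contraTneq ab => ->; rewrite mul0r ltxx.
have -> : b / a = (a * b) / (a * a) by field.
by rewrite divr_gt0 // lt_neqAle eq_sym mulf_neq0 //= -expr2 sqr_ge0.
Qed.

Lemma conforms_trans a b c : conforms a b -> conforms b c -> conforms a c.
Proof.
move=> [ab ba] [bc cb]; split; last by move=> /cb /ba.
have [bn|bp|b0] := ltgtP b 0; last by rewrite (ba b0) mul0r.
- have : a <= 0 by rewrite -(nmulr_lge0 _ bn).
  have : c <= 0 by rewrite -(nmulr_rge0 _ bn).
  nra.
- have : 0 <= a by rewrite -(pmulr_lge0 _ bp).
  have : 0 <= c by rewrite -(pmulr_rge0 _ bp).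
  nra.
Qed.

Lemma conforms_mul_ge0 a b x : conforms a x -> conforms b x -> 0 <= a * b.
Proof.
move=> [ax xa] [bx xb].
have [xn|xp|x0] := ltgtP x 0; last by rewrite (xa x0) mul0r.
- have : a <= 0 by rewrite -(nmulr_lge0 _ xn).
  have : b <= 0 by rewrite -(nmulr_lge0 _ xn).
  nra.
- have : 0 <= a by rewrite -(pmulr_lge0 _ xp).
  have : 0 <= b by rewrite -(pmulr_lge0 _ xp).
  nra.
Qed.

Lemma between0_refl a : between0 a a.
Proof. by rewrite /between0; lra. Qed.

Lemma between0_trans a b c : between0 a b -> between0 b c -> between0 a c.
Proof. by rewrite /between0; lra. Qed.

Lemma between0_add a b c : between0 a b -> 0 <= b * c -> between0 (a + c) (b + c).
Proof. by rewrite /between0; case: (lerP 0 b) => b0; nra. Qed.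

Lemma same_sign_add a b : 0 <= a * b ->
  between0 a (a + b) /\ `|a + b| = `|a| + `|b|.
Proof.
have [an|ap|->] := ltgtP a 0; last first.
- by rewrite add0r normr0 add0r /between0 => _; split=> //; lra.
- rewrite (pmulr_rge0 _ ap) => bp.
  rewrite (gtr0_norm ap) (ger0_norm bp) ger0_norm /between0; lra.
- rewrite (nmulr_rge0 _ an) => bn.
  rewrite (ltr0_norm an) (ler0_norm bn) ler0_norm /between0; lra.
Qed.

End Signs.

Section Hoffman.
Variables (R : realType) (Z J : finType) (phi : J -> Z -> R).

Definition lincomb (a : R) (x : Z -> R) (b : R) (y : Z -> R) : Z -> R :=
  fun z => a * x z + b * y z.

Definition linimg (x : Z -> R) (j : J) : R := \sum_z phi j z * x z.

Definition graph (x : Z -> R) (i : Z + J) : R :=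
  match i with inl z => x z | inr j => linimg x j end.

Definition gsupp (x : Z -> R) : {set Z + J} := [set i | graph x i != 0].

Definition conformal (e x : Z -> R) : Prop :=
  forall i, conforms (graph e i) (graph x i).

Definition elementary (e : Z -> R) : Prop :=
  gsupp e != finset.set0 /\
  forall e', gsupp e' != finset.set0 -> gsupp e' \subset gsupp e -> gsupp e \subset gsupp e'.

Definition img_norm (x : Z -> R) : R := \sum_j `|linimg x j|.

Lemma graph_lincomb a x b y i :
  graph (lincomb a x b y) i = a * graph x i + b * graph y i.
Proof.
case: i => [z|j] //=; rewrite /linimg /lincomb !mulr_sumr -big_split /=.
by apply: eq_bigr => z _; ring.
Qed.

Lemma linimg_lincomb a x b y j :
  linimg (lincomb a x b y) j = a * linimg x j + b * linimg y j.
Proof. exact: (graph_lincomb a x b y (inr j)). Qed.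

Lemma in_gsupp x i : (i \in gsupp x) = (graph x i != 0).
Proof. by rewrite inE. Qed.

Lemma graph_eq0 x : gsupp x = finset.set0 -> forall i, graph x i = 0.
Proof. by move=> x0 i; apply/eqP; rewrite -[_ == 0]negbK -in_gsupp x0 inE. Qed.

Lemma img_norm_ge0 x : 0 <= img_norm x.
Proof. by apply: sumr_ge0 => j _; apply: normr_ge0. Qed.

Lemma conformal_refl x : conformal x x.
Proof. by move=> i; split => //; rewrite -expr2 sqr_ge0. Qed.

Lemma conformal_trans x y w : conformal x y -> conformal y w -> conformal x w.
Proof. by move=> xy yw i; apply: conforms_trans (xy i) (yw i). Qed.

Lemma conformal_supp y x : conformal y x -> gsupp y \subset gsupp x.
Proof.
move=> yx; apply/fintype.subsetP => i; rewrite !in_gsupp.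
by apply: contra => /eqP /(yx i).2 ->.
Qed.

(* The ratio test of the simplex method: move from [x] along [-e] until a
   coordinate of the graph vanishes. *)
Lemma ratio_step x e : gsupp e \subset gsupp x -> (exists i, 0 < graph e i * graph x i) ->
  exists2 t, 0 < t & conformal (lincomb 1 x (- t) e) x /\
                     (#|gsupp (lincomb 1 x (- t) e)| < #|gsupp x|)%N.
Proof.
move=> sub [i1 Pi1].
pose P := [pred i | 0 < graph e i * graph x i].
have [i0 Pi0 Hmin] := @arg_minP _ _ _ i1 P (fun i => graph x i / graph e i) Pi1.
set t := graph x i0 / graph e i0.
have t0 : 0 < t by apply: ratio_gt0.
have ex0 i : graph x i = 0 -> graph e i = 0.
  move=> xi0; apply/eqP; rewrite -[_ == 0]negbK -in_gsupp.
  by apply/negP => /(fintype.subsetP sub); rewrite in_gsupp xi0 eqxx.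
have Hstep i : graph (lincomb 1 x (- t) e) i = graph x i - t * graph e i.
  by rewrite graph_lincomb mul1r mulNr.
have cf : conformal (lincomb 1 x (- t) e) x.
  move=> i; rewrite Hstep; split; last by move=> xi0; rewrite xi0 ex0 // mulr0 subr0.
  have [Pi|] := ltrP 0 (graph e i * graph x i); last by nra.
  have ei0 : graph e i != 0 by apply: contraTneq Pi => ->; rewrite mul0r ltxx.
  have : t * (graph e i * graph x i) <= graph x i / graph e i * (graph e i * graph x i).
    by apply: ler_wpM2r; [exact: ltW | exact: Hmin].
  have -> : graph x i / graph e i * (graph e i * graph x i) = graph x i * graph x i by field.
  by nra.
exists t => //; split=> //; apply: proper_card; apply/properP.
split; first exact: conformal_supp.
have {}Pi0 : 0 < graph e i0 * graph x i0 := Pi0.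
have ei0 : graph e i0 != 0 by apply: contraTneq Pi0 => ->; rewrite mul0r ltxx.
exists i0; first by rewrite in_gsupp; apply: contraTneq Pi0 => ->; rewrite mulr0 ltxx.
by rewrite in_gsupp Hstep negbK /t; apply/eqP; field.
Qed.

Lemma shrink_support x e : gsupp e != finset.set0 -> gsupp e \proper gsupp x ->
  exists e', [/\ conformal e' x, gsupp e' != finset.set0 & (#|gsupp e'| < #|gsupp x|)%N].
Proof.
case/set0Pn=> i1 e_i1 /properP[sub [i2 x_i2 e_i2]].
wlog pos : e e_i1 sub e_i2 / 0 < graph e i1 * graph x i1.
  move=> hwlog; have [/hwlog|] := ltrP 0 (graph e i1 * graph x i1); first exact.
  have x_i1 := fintype.subsetP sub _ e_i1.
  have ne0 : graph e i1 * graph x i1 != 0 by rewrite mulf_neq0 -?in_gsupp.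
  rewrite le_eqVlt (negPf ne0) /= => neg.
  have Hopp i : graph (lincomb (-1) e 0 e) i = - graph e i.
    by rewrite graph_lincomb mul0r addr0 mulN1r.
  have Sopp : gsupp (lincomb (-1) e 0 e) = gsupp e.
    by apply/setP => i; rewrite !in_gsupp Hopp oppr_eq0.
  apply: (hwlog (lincomb (-1) e 0 e)); rewrite ?Sopp //.
  by rewrite Hopp mulNr oppr_gt0.
have [t t0 [cf lt]] := ratio_step sub (ex_intro _ i1 pos).
exists (lincomb 1 x (- t) e); split=> //; apply/set0Pn; exists i2.
rewrite in_gsupp graph_lincomb; apply: contra e_i2.
rewrite in_gsupp mul1r mulNr subr_eq0 => /eqP xe.
by move: x_i2; rewrite in_gsupp xe mulf_eq0 negb_or => /andP[].
Qed.

Lemma elementary_conformal_exists x : gsupp x != finset.set0 ->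
  exists e, elementary e /\ conformal e x.
Proof.
have [n] := ubnP #|gsupp x|; elim: n x => // n IH x hn nzx.
have [[e' [nze' prop]]|minimal] :=
  pselect (exists e', gsupp e' != finset.set0 /\ gsupp e' \proper gsupp x).
  have [e'' [cf nz'' lt]] := shrink_support nze' prop.
  have [|e [ee cfe]] := IH e'' _ nz''; first by apply: leq_trans lt _; rewrite -ltnS.
  by exists e; split=> //; apply: conformal_trans cfe cf.
exists x; split; last exact: conformal_refl.
split=> // e' nze' sub; apply/negPn/negP => nsub.
by apply: minimal; exists e'; rewrite properE sub nsub.
Qed.

Lemma elementary_scale e e' : elementary e -> gsupp e' = gsupp e ->
  exists c, forall i, graph e' i = c * graph e i.
Proof.
move=> [nze He] Se'.
have /set0Pn[i0 e_i0] := nze; rewrite in_gsupp in e_i0.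
exists (graph e' i0 / graph e i0).
pose w := lincomb 1 e' (- (graph e' i0 / graph e i0)) e.
have Hw i : graph w i = graph e' i - graph e' i0 / graph e i0 * graph e i.
  by rewrite graph_lincomb mul1r mulNr.
have [w0|nzw] := eqVneq (gsupp w) finset.set0.
  by move=> i; apply/eqP; rewrite -subr_eq0 -Hw graph_eq0.
have sub : gsupp w \subset gsupp e.
  apply/fintype.subsetP => i; rewrite -Se' !in_gsupp Hw.
  apply: contra => /eqP e'_i; have : i \notin gsupp e by rewrite -Se' in_gsupp e'_i eqxx.
  by rewrite in_gsupp negbK e'_i => /eqP ->; rewrite mulr0 subr0.
have := fintype.subsetP (He w nzw sub) i0; rewrite !in_gsupp Hw e_i0 => /(_ isT).
have -> : graph e' i0 - graph e' i0 / graph e i0 * graph e i0 = 0 by field.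
by rewrite eqxx.
Qed.

(* Elementary vectors with a given support are proportional, so one ratio per
   support set suffices. *)
Lemma elementary_norm1_le : exists2 C, 0 <= C &
  forall e, elementary e -> img_norm e != 0 -> norm1 e <= C * img_norm e.
Proof.
pose good (A : {set Z + J}) e := [/\ elementary e, gsupp e = A & img_norm e != 0].
pose ratio (A : {set Z + J}) : R :=
  if pselect (exists e, good A e) is left h
  then norm1 (proj1_sig (cid h)) / img_norm (proj1_sig (cid h)) else 0.
have ratio_ge0 A : 0 <= ratio A.
  rewrite /ratio; case: pselect => // h.
  by rewrite divr_ge0 ?img_norm_ge0 //; apply: sumr_ge0 => z _; apply: normr_ge0.
exists (\sum_A ratio A); first exact: sumr_ge0.
move=> e ee fe.
suff -> : norm1 e = ratio (gsupp e) * img_norm e.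
  by rewrite ler_wpM2r ?img_norm_ge0 // (bigD1 (gsupp e)) //= lerDl sumr_ge0.
rewrite /ratio; case: pselect => [h|[]]; last by exists e.
case: (cid h) => e0 [ee0 Se0 fe0] /=.
have [c Hc] := elementary_scale ee0 (esym Se0).
have n1e : norm1 e = `|c| * norm1 e0.
  by rewrite /norm1 mulr_sumr; apply: eq_bigr => z _; move: (Hc (inl z)) => /= ->; rewrite normrM.
have fne : img_norm e = `|c| * img_norm e0.
  by rewrite /img_norm mulr_sumr; apply: eq_bigr => j _; move: (Hc (inr j)) => /= ->; rewrite normrM.
by rewrite n1e fne; field.
Qed.

Lemma img_norm_le x : (forall j z, `|phi j z| <= 1) -> img_norm x <= #|J|%:R * norm1 x.
Proof.
move=> phi1; have img_le j : `|linimg x j| <= norm1 x.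
  apply: le_trans (ler_norm_sum _ _ _) _; apply: ler_sum => z _.
  by rewrite normrM ler_piMl.
by apply: le_trans (ler_sum _ (fun j _ => img_le j)) _; rewrite sumr_const mulr_natl.
Qed.

Lemma peel_elementary x : gsupp x != finset.set0 -> exists e t,
  [/\ elementary e, 0 < t, (#|gsupp (lincomb 1 x (- t) e)| < #|gsupp x|)%N
    & forall i, 0 <= graph (lincomb 1 x (- t) e) i * (t * graph e i)].
Proof.
move=> nzx; have [e [ee cfe]] := elementary_conformal_exists nzx.
have [t t0 [cft lt]] : exists2 t, 0 < t & conformal (lincomb 1 x (- t) e) x /\
    (#|gsupp (lincomb 1 x (- t) e)| < #|gsupp x|)%N.
  apply: ratio_step; first exact: conformal_supp.
  have /set0Pn[i e_i] := ee.1; exists i; rewrite lt_neqAle eq_sym (cfe i).1 andbT.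
  by rewrite mulf_neq0 -?in_gsupp //; apply: (fintype.subsetP (conformal_supp cfe)).
exists e, t; split=> // i; apply: conforms_mul_ge0 (cft i) _.
split; last by move=> /(cfe i).2 ->; rewrite mulr0.
by rewrite -mulrA; apply: mulr_ge0; [exact: ltW | exact: (cfe i).1].
Qed.

(* Induction on the support: peel off a conformal elementary vector. *)
Lemma hoffman_bound : exists2 C, 0 <= C & forall x, exists u,
  [/\ forall j, linimg u j = linimg x j, forall z, between0 (u z) (x z)
    & norm1 u <= C * img_norm x].
Proof.
have [C C0 HC] := elementary_norm1_le; exists C => // x.
have [n] := ubnP #|gsupp x|; elim: n x => // n IH x hn.
have [x0|nzx] := eqVneq (gsupp x) finset.set0.
  exists x; split=> // [z|]; first exact: between0_refl.
  rewrite /norm1 big1 ?mulr_ge0 ?img_norm_ge0 // => z _.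
  by move: (graph_eq0 x0 (inl z)) => /= ->; rewrite normr0.
have [e [t [ee t0 lt sign]]] := peel_elementary nzx; set x' := lincomb 1 x (- t) e.
have [|u' [imu' btu' nu']] := IH x'; first by apply: leq_trans lt _; rewrite -ltnS.
have Hx' i : graph x i = graph x' i + t * graph e i by rewrite graph_lincomb; ring.
have x_split i : between0 (graph x' i) (graph x i) /\
            `|graph x i| = `|graph x' i| + t * `|graph e i|.
  by rewrite Hx'; have [bx ->] := same_sign_add (sign i); rewrite normrM gtr0_norm.
have img_norm_split : img_norm x = img_norm x' + t * img_norm e.
  by rewrite /img_norm mulr_sumr -big_split; apply: eq_bigr => j _; rewrite (x_split (inr j)).2.
have imx' j : linimg x' j = linimg x j - t * linimg e j.
  by rewrite linimg_lincomb mul1r mulNr.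
have [fe|fe] := eqVneq (img_norm e) 0.
  have fe0 j : linimg e j = 0.
    by apply/normr0_eq0; apply: (psumr_eq0P _ fe) => // i _; apply: normr_ge0.
  exists u'; split.
  - by move=> j; rewrite imu' imx' fe0 mulr0 subr0.
  - by move=> z; apply: between0_trans (btu' z) (x_split (inl z)).1.
  - by rewrite img_norm_split fe mulr0 addr0.
exists (lincomb 1 u' t e); split.
- by move=> j; rewrite linimg_lincomb mul1r imu' imx' subrK.
- move=> z; move: (Hx' (inl z)) (sign (inl z)) => /= -> sz.
  by rewrite /lincomb mul1r; apply: between0_add (btu' z) sz.
- apply: le_trans (_ : norm1 u' + t * norm1 e <= _).
    rewrite /norm1 mulr_sumr -big_split /=; apply: ler_sum => z _.
    by rewrite /lincomb mul1r (le_trans (ler_normD _ _)) // normrM gtr0_norm.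
  rewrite img_norm_split mulrDr lerD // mulrCA.
  by apply: ler_wpM2l; [exact: ltW | exact: HC].
Qed.

End Hoffman.

Section Signals.
Variables (R : realType) (k : nat) (Z : finType) (Sigma : eqType).
Variable S : 'I_k -> Z -> Sigma.

(* The linear map whose fibers over the simplex are the classes of [sig_rel]:
   one row for the total mass and one indicator row per signal class
   [{z | S a z = S a z0}], indexed by a representative [z0]. *)
Definition signal_row (j : option ('I_k * Z)) (z : Z) : R :=
  if j is Some (a, z0) then (S a z == S a z0)%:R else 1.

Local Notation img := (linimg signal_row).

Lemma img_mass x : img x None = \sum_z x z.
Proof. by apply: eq_bigr => z _; rewrite mul1r. Qed.

Lemma img_class x a z0 : img x (Some (a, z0)) = \sum_(z | S a z == S a z0) x z.
Proof.
rewrite /linimg [RHS]big_mkcond /=; apply: eq_bigr => z _.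
by case: eqP; rewrite ?mul1r ?mul0r.
Qed.

Lemma sig_relP x y :
  sig_rel S x y <-> forall a z0, img x (Some (a, z0)) = img y (Some (a, z0)).
Proof.
split=> [rel a z0|h a s]; first by rewrite !img_class rel.
have [[z0 /eqP <-]|none] := pselect (exists z0, S a z0 == s); first by rewrite -!img_class.
by rewrite !big1 // => z /eqP Sz; case: none; exists z; rewrite Sz.
Qed.

Lemma signal_row_le1 j z : `|signal_row j z| <= 1.
Proof. by case: j => [[a z0]|]; rewrite /= ?normr1 //; case: eqP; rewrite ?normr1 ?normr0. Qed.

Lemma img_simplex x y : simplex x -> simplex y -> img x None = img y None.
Proof. by move=> [_ x1] [_ y1]; rewrite !img_mass x1 y1. Qed.

(* Hoffman's bound applied to [y - x']; domination keeps [x' + u] between [x']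
   and [y], hence in the simplex. *)
Lemma sig_rel_fiber_close : exists2 K : R, 0 <= K & forall x x' y,
  simplex x' -> simplex y -> sig_rel S x' x ->
  exists y', [/\ simplex y', sig_rel S y' y &
    norm1 (fun z => x' z - y' z) <= K * norm1 (fun z => x z - y z)].
Proof.
have [C C0 HC] := hoffman_bound signal_row.
exists (C * #|{: option ('I_k * Z)}|%:R); first by rewrite mulr_ge0.
move=> x x' y hx' hy /sig_relP rel.
have [u [imu btu nu]] := HC (lincomb 1 y (-1) x').
have imy' j : img (lincomb 1 x' 1 u) j = img y j.
  by rewrite linimg_lincomb imu linimg_lincomb; ring.
exists (lincomb 1 x' 1 u); split.
- split; last by rewrite -img_mass imy' img_mass; case: hy.
  move=> z; have := btu z; rewrite /between0 /lincomb.
  by case: hx' => /(_ z) + _; case: hy => /(_ z) + _; lra.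
- by apply/sig_relP => a z0; apply: imy'.
have -> : norm1 (fun z => x' z - lincomb 1 x' 1 u z) = norm1 u.
  by apply: eq_bigr => z _; rewrite /lincomb !mul1r opprD addrA subrr sub0r normrN.
apply: le_trans nu _; rewrite -mulrA; apply: ler_wpM2l => //.
have : img_norm signal_row (lincomb 1 y (-1) x') <= img_norm signal_row (lincomb 1 y (-1) x).
  apply: ler_sum => -[[a z0]|] _; first by rewrite !linimg_lincomb rel.
  by rewrite linimg_lincomb (img_simplex hx' hy) mul1r mulN1r addrN normr0 normr_ge0.
move/le_trans; apply; apply: le_trans (img_norm_le _ (@signal_row_le1)) _.
rewrite ler_wpM2l // le_eqVlt; apply/orP; left; apply/eqP.
by apply: eq_bigr => z _; rewrite /lincomb distrC; congr `|_|; ring.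
Qed.

End Signals.

Section Loss.
Variables (R : realType) (k : nat) (Z : finType) (Sigma : eqType).
Variables (L : 'I_k -> Z -> R) (S : 'I_k -> Z -> Sigma).
Hypothesis hL : forall a z, 0 <= L a z <= 1.

Lemma lossE_lincomb pi a x b y :
  lossE L pi (lincomb a x b y) = a * lossE L pi x + b * lossE L pi y.
Proof.
rewrite /lossE !mulr_sumr -big_split /=; apply: eq_bigr => i _.
by rewrite !mulr_sumr -big_split /=; apply: eq_bigr => z _; rewrite /lincomb; ring.
Qed.

Lemma lossE_ge0 pi x : simplex pi -> simplex x -> 0 <= lossE L pi x.
Proof.
move=> [pi0 _] [x0 _]; apply: sumr_ge0 => a _; apply: sumr_ge0 => z _.
by rewrite !mulr_ge0 //; case/andP: (hL a z).
Qed.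

Lemma lossE_le1 pi x : simplex pi -> simplex x -> lossE L pi x <= 1.
Proof.
move=> [pi0 pi1] [x0 x1].
apply: (@le_trans _ _ (\sum_a \sum_z pi a * x z)); last by rewrite -big_distrlr /= pi1 x1 mulr1.
apply: ler_sum => a _; apply: ler_sum => z _.
by apply: ler_piMr; [rewrite mulr_ge0 | case/andP: (hL a z)].
Qed.

Lemma lossE_sub_le pi x y : simplex pi ->
  lossE L pi x - lossE L pi y <= norm1 (fun z => x z - y z).
Proof.
move=> [pi0 pi1].
have -> : lossE L pi x - lossE L pi y = lossE L pi (lincomb 1 x (-1) y).
  by rewrite lossE_lincomb; ring.
apply: (@le_trans _ _ (\sum_a \sum_z pi a * `|x z - y z|)); last first.
  by rewrite -big_distrlr /= pi1 mul1r.
apply: ler_sum => a _; apply: ler_sum => z _; rewrite /lincomb -mulrA ler_wpM2l //.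
apply: le_trans (ler_norm _) _; rewrite normrM mul1r mulN1r.
by case/andP: (hL a z) => L0 L1; rewrite (ger0_norm L0) ler_piMr.
Qed.

Lemma Vfun_ge pi x y : simplex pi -> simplex y -> sig_rel S y x ->
  lossE L pi y <= Vfun L S pi x.
Proof.
move=> hpi hy rel; apply: ub_le_sup; last by exists y.
by exists 1 => _ [y' [hy' _] <-]; apply: lossE_le1.
Qed.

Lemma Vfun_le pi x b : simplex x ->
  (forall y, simplex y -> sig_rel S y x -> lossE L pi y <= b) -> Vfun L S pi x <= b.
Proof.
move=> hx ub; apply: ge_sup; first by exists (lossE L pi x), x.
by move=> _ [y [hy rel] <-]; apply: ub.
Qed.

Lemma Vstar_le_Vfun pi x : simplex pi -> simplex x -> Vstar L S x <= Vfun L S pi x.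
Proof.
move=> hpi hx; apply: ge_inf; last by exists pi.
exists 0 => _ [p hp <-].
by apply: le_trans (lossE_ge0 hp hx) _; apply: Vfun_ge.
Qed.

Lemma Delta_ge0 pi x : simplex pi -> simplex x -> 0 <= Delta L S pi x.
Proof. by move=> hpi hx; rewrite subr_ge0; apply: Vstar_le_Vfun. Qed.

Lemma Vfun_lipschitz : exists2 K, 0 <= K & forall pi x y,
  simplex pi -> simplex x -> simplex y ->
  Vfun L S pi x <= Vfun L S pi y + K * norm1 (fun z => x z - y z).
Proof.
have [K K0 HK] := sig_rel_fiber_close R S; exists K => // pi x y hpi hx hy.
apply: Vfun_le => // x' hx' rel.
have [y' [hy' rel' close]] := HK x x' y hx' hy rel.
have := lossE_sub_le x' y' hpi; have := Vfun_ge hpi hy' rel'; lra.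
Qed.

Lemma simplex_lincomb (t : R) (p q : Z -> R) : 0 <= t <= 1 -> simplex p -> simplex q ->
  simplex (lincomb t p (1 - t) q).
Proof.
move=> /andP[t0 t1] [p0 p1] [q0 q1]; split.
  by move=> z; rewrite /lincomb addr_ge0 // mulr_ge0 // subr_ge0.
rewrite /lincomb big_split /= -!mulr_sumr p1 q1; ring.
Qed.

Lemma sig_rel_lincomb (a b : R) p q p' q' : sig_rel S p' p -> sig_rel S q' q ->
  sig_rel S (lincomb a p' b q') (lincomb a p b q).
Proof.
move=> /sig_relP rp /sig_relP rq; apply/sig_relP => s z0.
by rewrite !linimg_lincomb rp rq.
Qed.

(* The fiber over a convex combination contains the convex combinations of
   the fibers, so the supremum [V] is concave. *)
Lemma Vfun_concave pi (p q : Z -> R) (t : R) : simplex pi -> simplex p -> simplex q -> 0 < t < 1 ->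
  t * Vfun L S pi p + (1 - t) * Vfun L S pi q <= Vfun L S pi (lincomb t p (1 - t) q).
Proof.
move=> hpi hp hq /andP[t0 t1].
set M := Vfun L S pi (lincomb t p (1 - t) q).
have t01 : 0 <= t <= 1 by rewrite !ltW.
have t1' : 0 < 1 - t by rewrite subr_gt0.
have comb p' q' : simplex p' -> sig_rel S p' p -> simplex q' -> sig_rel S q' q ->
    t * lossE L pi p' + (1 - t) * lossE L pi q' <= M.
  move=> hp' rp hq' rq; rewrite -lossE_lincomb.
  by apply: Vfun_ge => //; [apply: simplex_lincomb | apply: sig_rel_lincomb].
have sup_p q' : simplex q' -> sig_rel S q' q ->
    t * Vfun L S pi p <= M - (1 - t) * lossE L pi q'.
  move=> hq' rq; rewrite mulrC -ler_pdivlMr //.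
  apply: Vfun_le => // p' hp' rp; rewrite ler_pdivlMr // mulrC.
  by have := comb _ _ hp' rp hq' rq; lra.
suff : Vfun L S pi q <= (M - t * Vfun L S pi p) / (1 - t).
  by rewrite ler_pdivlMr // => h; lra.
apply: Vfun_le => // q' hq' rq; rewrite ler_pdivlMr // mulrC.
by have := sup_p _ hq' rq; lra.
Qed.

End Loss.

Section Distance.
Variables (R : realType) (Z : finType).

Lemma le_mul_dist1 (x : Z -> R) (F : set (Z -> R)) (b l : R) : 0 < l -> F !=set0 ->
  (forall y, F y -> b <= l * norm1 (fun z => x z - y z)) -> b <= l * dist1 x F.
Proof.
move=> l0 [y0 Fy0] near; rewrite mulrC -ler_pdivrMr //; apply: lb_le_inf.
  by exists (norm1 (fun z => x z - y0 z)), y0.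
by move=> _ [y Fy <-]; rewrite ler_pdivrMr // mulrC; apply: near.
Qed.

Lemma relint_extend (F : set (Z -> R)) x0 y : relint F x0 -> F y ->
  exists2 ep : R, 0 < ep & F (lincomb (1 + ep) x0 (- ep) y).
Proof.
move=> [Fx0 [eps [eps0 ball]]] Fy.
pose N := norm1 (fun z => x0 z - y z).
have N0 : 0 <= N by apply: sumr_ge0 => z _; apply: normr_ge0.
have ep0 : 0 < eps / (N + 1) by rewrite divr_gt0 // ltr_wpDl.
exists (eps / (N + 1)) => //; set ep := eps / (N + 1).
apply: ball.
  exists 2%N, (fun i : 'I_2 => if val i == 0%N then x0 else y),
    (fun i : 'I_2 => if val i == 0%N then 1 + ep else - ep).
  split; first by move=> i; case: ifP.
  split; first by rewrite big_ord_recl big_ord1 /=; ring.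
  by move=> z; rewrite big_ord_recl big_ord1.
have -> : norm1 (fun z => lincomb (1 + ep) x0 (- ep) y z - x0 z) = ep * N.
  rewrite /N mulr_sumr; apply: eq_bigr => z _.
  have -> : lincomb (1 + ep) x0 (- ep) y z - x0 z = ep * (x0 z - y z).
    by rewrite /lincomb; ring.
  by rewrite normrM gtr0_norm.
by rewrite /ep mulrAC ltr_pdivrMr ?ltr_wpDl // mulrDr mulr1 ltrDl.
Qed.

End Distance.

Section Cells.
Variables (R : realType) (k : nat) (Z : finType) (Sigma : eqType).
Variables (L : 'I_k -> Z -> R) (S : 'I_k -> Z -> Sigma).
Hypothesis hL : forall a z, 0 <= L a z <= 1.
Variables (m : nat) (c : 'I_m -> Z -> R).
Hypothesis hc : min_repr L S c.

Lemma linv_lincomb al a x b y :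
  linv c al (lincomb a x b y) = a * linv c al x + b * linv c al y.
Proof.
by rewrite /linv !mulr_sumr -big_split /=; apply: eq_bigr => z _; rewrite /lincomb; ring.
Qed.

Lemma Vstar_lipschitz : exists2 C, 0 <= C & forall x y, simplex x -> simplex y ->
  Vstar L S y <= Vstar L S x + C * norm1 (fun z => x z - y z).
Proof.
pose C := \sum_al \sum_z `|c al z|.
have row_ge0 al : 0 <= \sum_z `|c al z| by apply: sumr_ge0 => z _; apply: normr_ge0.
have cC al z : `|c al z| <= C.
  apply: le_trans (_ : \sum_z' `|c al z'| <= C).
    by rewrite (bigD1 z) //= lerDl sumr_ge0 // => z' _; apply: normr_ge0.
  by rewrite /C (bigD1 al) //= lerDl sumr_ge0.
exists C; first exact: sumr_ge0.
move=> x y hx hy; have [[al ->] _] := hc hx.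
apply: le_trans ((hc hy).2 al) _.
have -> : linv c al y = linv c al x + linv c al (lincomb 1 y (-1) x).
  by rewrite linv_lincomb; ring.
rewrite lerD2l /linv mulr_sumr; apply: ler_sum => z _.
apply: le_trans (ler_norm _) _; rewrite normrM /lincomb mul1r mulN1r distrC.
by rewrite ler_wpM2r.
Qed.

(* On a cell [V_*] is linear while [V] is concave. *)
Lemma Delta_concave_cell al pi p q (t : R) : simplex pi ->
  cell L S c al p -> cell L S c al q -> cell L S c al (lincomb t p (1 - t) q) -> 0 < t < 1 ->
  t * Delta L S pi p + (1 - t) * Delta L S pi q <= Delta L S pi (lincomb t p (1 - t) q).
Proof.
move=> hpi [hp Vp] [hq Vq] [_ Vpq] t01.
have := Vfun_concave S hL hpi hp hq t01.
by rewrite /Delta Vp Vq Vpq linv_lincomb; lra.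
Qed.

(* [x0] is a strict convex combination of [y] and a point of [F] beyond [x0]. *)
Lemma Delta_eq0_relint al (F : set (Z -> R)) x0 pi y : F `<=` cell L S c al ->
  relint F x0 -> simplex pi -> Delta L S pi x0 = 0 -> F y -> Delta L S pi y = 0.
Proof.
move=> Fcell rx0 hpi D0 Fy.
have [ep ep0 Fe] := relint_extend rx0 Fy.
set e := lincomb (1 + ep) x0 (- ep) y in Fe.
have ep1 : 0 < 1 + ep by rewrite ltr_wpDl.
have t01 : 0 < (1 + ep)^-1 < 1 by rewrite invr_gt0 ep1 invf_lt1 // ltrDl.
have x0E : x0 = lincomb (1 + ep)^-1 e (1 - (1 + ep)^-1) y.
  by apply: funext => z; rewrite /e /lincomb; field; rewrite gt_eqF.
have := Delta_concave_cell hpi (Fcell _ Fe) (Fcell _ Fy) _ t01.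
rewrite -x0E D0 => /(_ (Fcell _ rx0.1)).
have := Delta_ge0 S hL hpi (Fcell _ Fe).1; have := Delta_ge0 S hL hpi (Fcell _ Fy).1.
move: t01 => /andP[t0 t1] Dy De conc; apply/eqP; rewrite eq_le Dy andbT.
by nra.
Qed.

End Cells.

Theorem lemma9 (R : realType) (k : nat) (Z : finType) (Sigma : eqType)
  (L : 'I_k -> Z -> R) (S : 'I_k -> Z -> Sigma)
  (hL : forall a z, 0 <= L a z <= 1)
  (m : nat) (c : 'I_m -> Z -> R) (hc : minimal_repr L S c) :
  exists Lip : R,
    forall (alpha : 'I_m) (F : set (Z -> R)),
      face (cell L S c alpha) F -> F !=set0 ->
      forall x : Z -> R, simplex x ->
      forall pi : 'I_k -> R, NF L S F pi ->
        Delta L S pi x <= Lip * dist1 x F.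
Proof.
have [K K0 HK] := Vfun_lipschitz S hL.
have [C C0 HC] := Vstar_lipschitz hc.1.
exists (K + C + 1) => al F hF F0 x hx pi [x0 [rx0 [hpi D0]]].
have Fcell : F `<=` cell L S c al by case: hF => a [b [_ ->]] w [].
apply: le_mul_dist1 => // [|y Fy]; first by rewrite ltr_wpDl // addr_ge0.
have [hy _] := Fcell _ Fy.
have := Delta_eq0_relint hL Fcell rx0 hpi D0 Fy.
have := HK pi x y hpi hx hy; have := HC x y hx hy.
have : 0 <= norm1 (fun z => x z - y z) by apply: sumr_ge0 => z _; apply: normr_ge0.
by rewrite /Delta; nra.
Qed.
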